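(* For all sufficiently large $n$, $$\tfrac12 \log_2 n \le h_3(n,\{(4,1),(4,3)\}) < 4(\log_2 n)^2.$$
   Context: For an $r$-uniform hypergraph ($r$-graph) $H$, a homogeneous set is a set of vertices that is either a clique (every $r$-subset is an edge) or a coclique (no $r$-subset is an edge); $h(H)$ denotes the size of a largest homogeneous set. An $(m,f)$-graph is an $r$-graph with $m$ vertices and $f$ edges; $H$ is $(m,f)$-free if it contains no induced sub-hypergraph that is an $(m,f)$-graph. For a set $Q$ of pairs $(m,f)$, $H$ is $Q$-free if it is $(m,f)$-free for every $(m,f)\in Q$. $h_r(n,Q)$ is the minimum of $h(H)$ over all $n$-vertex $Q$-free $r$-graphs $H$. *)

From mathcomp Require Import all_boot.
From Stdlib Require Import Reals.
Set Implicit Arguments. Unset Strict Implicit. Unset Printing Implicit Defensive.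

Section Hyper.
Variable T : finType.

Definition uniform (r : nat) (E : {set {set T}}) : bool :=
  [forall e in E, #|e| == r].

Definition is_clique (r : nat) (E : {set {set T}}) (S : {set T}) : bool :=
  [forall e : {set T}, ((e \subset S) && (#|e| == r)) ==> (e \in E)].

Definition is_coclique (r : nat) (E : {set {set T}}) (S : {set T}) : bool :=
  [forall e : {set T}, ((e \subset S) && (#|e| == r)) ==> (e \notin E)].

Definition homogeneous (r : nat) (E : {set {set T}}) (S : {set T}) : bool :=
  is_clique r E S || is_coclique r E S.

Definition hnum (r : nat) (E : {set {set T}}) : nat :=
  \max_(S : {set T} | homogeneous r E S) #|S|.

Definition edges_in (E : {set {set T}}) (S : {set T}) : nat :=
  #|[set e in E | e \subset S]|.

Definition mf_free (E : {set {set T}}) (m f : nat) : bool :=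
  ~~ [exists S : {set T}, (#|S| == m) && (edges_in E S == f)].

Definition Q_free (E : {set {set T}}) (Q : seq (nat * nat)) : bool :=
  all (fun p => mf_free E p.1 p.2) Q.

End Hyper.

(* The default value n of the min is harmless since h(H) <= n always
   (and the family is nonempty in the relevant case: the empty r-graph). *)
Definition h_rnQ (r n : nat) (Q : seq (nat * nat)) : nat :=
  \big[minn/n]_(E : {set {set 'I_n}} | uniform r E && Q_free E Q) hnum r E.

Definition log2 (x : R) : R := (ln x / ln 2)%R.

(* Lower bound.  Let E be such a 3-graph and w a vertex.  In the link graph
   of w (x ~ y iff {w,x,y} is an edge), a clique or an independent set S
   together with w is homogeneous in E: for a triple e of S, the 4-set
   w ∪ e would otherwise span exactly 3 or exactly 1 edges.  The
   Erdős–Szekeres bound gives such an S of size s as soon as 4^s < n, so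
   h(E) > s.

   Upper bound.  For a 2-colouring g of the pairs, the parity graph of g has
   as edges the triples whose three pairs carry an odd number of coloured
   pairs; each pair of a 4-set lies in two of its triples, so every 4-set
   spans an even number of edges.  If S is homogeneous and v ∈ S, the colour
   of each pair of S \ v is forced by colours of sets containing v; a union
   bound over (S, v, clique/coclique) then shows that some colouring has no
   homogeneous set of size k = 4 m^2, where 2^m <= n < 2^(m+1). *)

From mathcomp Require Import all_boot zify.
From Stdlib Require Import Reals Lra.
(* Re-imported so that the ssrnat notations take precedence over Reals'. *)
From mathcomp Require Import ssrnat.
Set Implicit Arguments. Unset Strict Implicit. Unset Printing Implicit Defensive.

Section Hypergraphs.
Variable T : finType.
Implicit Types (E : {set {set T}}) (S F e : {set T}).

Lemma card_set_sum (A : {set T}) (P : pred T) :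
  #|[set x in A | P x]| = \sum_(x in A) P x.
Proof.
rewrite -sum1_card big_mkcond /= [RHS]big_mkcond /=.
by apply: eq_bigr => x _; rewrite !inE; case: (x \in A); case: (P x).
Qed.

Lemma edges_in_deletions E F :
  0 < #|F| -> (forall e, e \in E -> #|e| = #|F|.-1) ->
  edges_in E F = #|[set u in F | F :\ u \in E]|.
Proof.
move=> F_gt0 unifE; rewrite /edges_in.
have -> : [set e in E | e \subset F] = [set F :\ u | u in [set u in F | F :\ u \in E]].
  apply/setP=> e; rewrite inE; apply/andP/imsetP => [[eE eF]|[u]].
    have /cards1P[u Fe_u] : #|F :\: e| == 1.
      by rewrite cardsDS // (unifE _ eE); apply/eqP; lia.
    have /setDP[uF _] : u \in F :\: e by rewrite Fe_u set11.
    have Fu_e : F :\ u = e by rewrite -Fe_u setDDr setDv set0U; apply/setIidPr.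
    by exists u; rewrite // inE uF Fu_e.
  by rewrite inE => /andP[_ FuE] ->; rewrite FuE subD1set.
rewrite card_in_imset // => u1 u2; rewrite !inE => /andP[u1F _] /andP[_ _] Fu12.
case: (eqVneq u1 u2) => // u12.
by have := setD11 u1 F; rewrite Fu12 !inE u1F u12.
Qed.

Lemma homogeneous_sub r E S S' :
  S' \subset S -> homogeneous r E S -> homogeneous r E S'.
Proof.
move=> sS; rewrite /homogeneous /is_clique /is_coclique => /orP[]/forallP hS;
 apply/orP; [left|right]; apply/forallP=> e; apply/implyP=> /andP[eS ee];
 apply: (implyP (hS e)); rewrite ee andbT; exact: subset_trans sS.
Qed.

Lemma homogeneous_le_hnum r E S : homogeneous r E S -> #|S| <= hnum r E.
Proof. exact: (@leq_bigmax_cond _ (homogeneous r E) (fun S : {set T} => #|S|)). Qed.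

Lemma hnum_lt r E k :
  (forall S, #|S| = k -> ~~ homogeneous r E S) -> hnum r E < k.
Proof.
move=> noHom; rewrite ltnNge; apply/negP => k_le.
have hom_gt0 : 0 < #|homogeneous r E|.
  apply/card_gt0P; exists set0; rewrite /in_mem /= /homogeneous.
  by case: (boolP (set0 \in E)) => E0; apply/orP; [left|right];
    apply/forallP=> e; apply/implyP=> /andP[]; rewrite subset0 => /eqP->.
have [S0 homS0 hnumE] := eq_bigmax_cond (fun S : {set T} => #|S|) hom_gt0.
rewrite /hnum hnumE in k_le.
have /card_gt0P[S] : 0 < #|[set S : {set T} | S \subset S0 & #|S| == k]|.
  by rewrite cards_draws bin_gt0.
rewrite inE => /andP[sS /eqP cardS].
by have := noHom S cardS; rewrite (homogeneous_sub sS homS0).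
Qed.

Lemma mf_freeP E m f F : mf_free E m f -> #|F| = m -> edges_in E F <> f.
Proof. by move=> /existsPn /(_ F) + cardF edF; rewrite cardF edF !eqxx. Qed.

End Hypergraphs.

Section GraphRamsey.
Variables (T : finType) (r : rel T).
Hypothesis r_sym : symmetric r.
Implicit Types (A S : {set T}) (c : bool).

Definition monochromatic (c : bool) (S : {set T}) : Prop :=
  forall x y, x \in S -> y \in S -> x != y -> r x y = c.

Lemma monochromatic_add c v S :
  (forall x, x \in S -> r v x = c) -> monochromatic c S -> monochromatic c (v |: S).
Proof.
move=> rvS monoS x y; rewrite !inE => /predU1P[->|xS] /predU1P[->|yS];
  rewrite ?eqxx // => xy; first [exact: rvS | by rewrite r_sym rvS | exact: monoS].
Qed.

Lemma ramsey_graph a b (A : {set T}) : 2 ^ (a + b) <= #|A| ->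
  exists S c, [/\ S \subset A, monochromatic c S & (if c then a else b) <= #|S|].
Proof.
have empty_ok c (B : {set T}) : exists S, [/\ S \subset B, monochromatic c S & 0 <= #|S|].
  by exists set0; split; [exact: sub0set | move=> x; rewrite inE | ].
elim: a b A => [|a IHa] b A; first by have [S] := empty_ok true A; exists S, true.
elim: b A => [|b IHb] A cardA; first by have [S] := empty_ok false A; exists S, false.
have [v vA] : exists v, v \in A by apply/card_gt0P; apply: leq_trans cardA; rewrite expn_gt0.
pose N := (A :\ v) :&: [set x | r v x]; pose M := (A :\ v) :\: [set x | r v x].
have [vN vM] : v \notin N /\ v \notin M by rewrite !inE eqxx andbF.
have [NA MA] : N \subset A /\ M \subset A.
  by split; apply: subset_trans (subD1set A v); [apply: subsetIl | apply: subsetDl].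
have cardNM : #|N| + #|M| = #|A|.-1.
  by rewrite cardsID (cardsD1 v A) vA.
have [bigN | smallN] := leqP (2 ^ (a + b.+1)) #|N|.
  have [S [[] [SN monoS cardS]]] := IHa b.+1 N bigN; last first.
    by exists S, false; rewrite (subset_trans SN NA).
  have rvS x : x \in S -> r v x = true.
    by move/(subsetP SN); rewrite !inE => /andP[_ ->].
  exists (v |: S), true; split; first by rewrite subUset sub1set vA (subset_trans SN NA).
    exact: monochromatic_add.
  by rewrite cardsU1 (contra (subsetP SN v)).
have bigM : 2 ^ (a.+1 + b) <= #|M|.
  by rewrite addSnnS; move: cardA; rewrite addSn expnS; lia.
have [S [[] [SM monoS cardS]]] := IHb M bigM.
  by exists S, true; rewrite (subset_trans SM MA).
have rvS x : x \in S -> r v x = false.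
  by move/(subsetP SM); rewrite !inE => /andP[/negbTE ->].
exists (v |: S), false; split; first by rewrite subUset sub1set vA (subset_trans SM MA).
  exact: monochromatic_add.
by rewrite cardsU1 (contra (subsetP SM v)).
Qed.

End GraphRamsey.

Section LinkGraph.
Variables (T : finType) (E : {set {set T}}) (w : T).
Implicit Types (S e : {set T}) (c : bool).

Definition link : rel T := fun x y => (w |: [set x; y]) \in E.

Lemma link_sym : symmetric link.
Proof. by move=> x y; rewrite /link [[set x; y]]setUC. Qed.

Lemma triple_minus e u : u \in e -> #|e| = 3 ->
  exists y z, [/\ y \in e, z \in e, y != z & e :\ u = [set y; z]].
Proof.
move=> ue cardE; have /cards2P[y [z [yz eu]]] : #|e :\ u| == 2.
  by move: (cardsD1 u e); rewrite ue cardE; lia.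
have /setD1P[_ ye] : y \in e :\ u by rewrite eu !inE eqxx.
have /setD1P[_ ze] : z \in e :\ u by rewrite eu !inE eqxx orbT.
by exists y, z.
Qed.

Hypotheses (E3 : uniform 3 E) (free41 : mf_free E 4 1) (free43 : mf_free E 4 3).

Lemma edges_in_cone c S e :
  w \notin S -> monochromatic link c S -> e \subset S -> #|e| = 3 ->
  edges_in E (w |: e) = c * 3 + (e \in E).
Proof.
move=> wS monoS eS cardE.
have we : w \notin e by apply: contra wS; apply: (subsetP eS).
have card_we : #|w |: e| = 4 by rewrite cardsU1 we cardE.
rewrite edges_in_deletions ?card_we //; last first.
  by move=> f fE; move: E3 => /forallP/(_ f); rewrite fE => /eqP.
rewrite card_set_sum big_setU1 //= setU1K // addnC; congr (_ + _).
rewrite mulnC -cardE -sum_nat_const; apply: eq_bigr => u ue.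
have [y [z [ye ze yz eu]]] := triple_minus ue cardE.
have uw : u != w by apply: contraNneq we => <-.
have -> : (w |: e) :\ u = w |: [set y; z].
  apply/setP=> x; rewrite -eu !inE.
  by case: (eqVneq x u) => [->|//]; rewrite (negbTE uw).
by have := monoS y z (subsetP eS y ye) (subsetP eS z ze) yz; rewrite /link => ->.
Qed.

(* Main link lemma: w together with a monochromatic set of its link graph is
   homogeneous, since a 4-set never spans exactly 1 or 3 edges. *)
Lemma link_homogeneous c S :
  w \notin S -> monochromatic link c S -> homogeneous 3 E (w |: S).
Proof.
move=> wS monoS.
suff edgeE e : e \subset w |: S -> #|e| = 3 -> (e \in E) = c.
  rewrite /homogeneous; case: c {monoS} edgeE => edgeE; apply/orP; [left|right];
  by apply/forallP=> e; apply/implyP=> /andP[eS /eqP cardE]; rewrite edgeE.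
move=> eS cardE; case: (boolP (w \in e)) => we.
  have [y [z [_ _ yz ew]]] := triple_minus we cardE.
  have inS x : x \in e :\ w -> x \in S.
    by case/setD1P=> xw /(subsetP eS); rewrite !inE (negbTE xw).
  have yS : y \in S by rewrite inS // ew set21.
  have zS : z \in S by rewrite inS // ew set22.
  by rewrite -(setD1K we) ew; have := monoS y z yS zS yz.
have eS' : e \subset S.
  by apply/subsetP=> x xe; move: (subsetP eS x xe); rewrite !inE; case: eqP xe we => // ->->.
have card4 : #|w |: e| = 4 by rewrite cardsU1 we cardE.
have := edges_in_cone wS monoS eS' cardE.
by case: c {monoS}; case: (e \in E) => //= edges;
  [case: (mf_freeP free43 card4) | case: (mf_freeP free41 card4)].
Qed.

End LinkGraph.

Lemma hnum_lower (T : finType) (E : {set {set T}}) s :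
  uniform 3 E -> mf_free E 4 1 -> mf_free E 4 3 -> 4 ^ s < #|T| ->
  s.+1 <= hnum 3 E.
Proof.
move=> E3 free41 free43 bigT.
have [w _] : exists w, w \in [set: T] by apply/card_gt0P; rewrite cardsT; lia.
pose A := [set: T] :\ w.
have bigA : 2 ^ (s + s) <= #|A|.
  have -> : 2 ^ (s + s) = 4 ^ s by rewrite addnn -mul2n expnM.
  by move: (cardsD1 w [set: T]); rewrite /A inE cardsT; lia.
have [S [c [SA monoS cardS]]] := ramsey_graph (link_sym E w) bigA.
have wS : w \notin S by apply: contraTN isT => /(subsetP SA); rewrite !inE eqxx.
apply: leq_trans (homogeneous_le_hnum (link_homogeneous E3 free41 free43 wS monoS)).
by rewrite cardsU1 wS; case: c {monoS} cardS.
Qed.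

Lemma card_forced (aT : finType) (P : {set aT}) (B : {set {ffun aT -> bool}}) :
  {in B &, forall g g' : {ffun aT -> bool}, {in ~: P, g =1 g'} -> g = g'} ->
  #|B| * 2 ^ #|P| <= #|{ffun aT -> bool}|.
Proof.
move=> detB; rewrite -card_powerset -cardsX.
pose glue (gc : {ffun aT -> bool} * {set aT}) :=
  [ffun x => if x \in P then x \in gc.2 else gc.1 x].
rewrite -(@card_in_imset _ _ glue (setX B (powerset P))); first exact: max_card.
move=> [g c] [g' c']; rewrite !inE /= => /andP[gB cP] /andP[g'B c'P] same_glue.
have glueE x : glue (g, c) x = glue (g', c') x by rewrite same_glue.
have -> : c = c'.
  apply/setP=> x; have := glueE x; rewrite !ffunE /=.
  case: (boolP (x \in P)) => // xP _.
  by rewrite (contraNF (subsetP cP x)) ?(contraNF (subsetP c'P x)).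
congr pair; apply: detB => // x; rewrite inE => xP.
by have := glueE x; rewrite !ffunE /= (negbTE xP).
Qed.

Lemma card_bigcup_scaled (I aT : finType) (P : {set I}) (A : I -> {set aT}) m M :
  (forall i, i \in P -> #|A i| * m <= M) -> #|\bigcup_(i in P) A i| * m <= #|P| * M.
Proof.
move=> boundA.
have union_le : #|\bigcup_(i in P) A i| <= \sum_(i in P) #|A i|.
  elim/big_rec2: _ => [|i n U _ IH]; first by rewrite cards0.
  by apply: leq_trans (leq_card_setU _ _).1 _; rewrite leq_add2l.
apply: leq_trans (leq_mul union_le (leqnn m)) _.
by rewrite big_distrl -[#|P| * M]sum_nat_const leq_sum.
Qed.

Section ParityConstruction.
Variable T : finType.
Local Notation colouring := {ffun {set T} -> bool}.
Implicit Types (g : colouring) (A F S p : {set T}).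

Definition parity_graph g : {set {set T}} :=
  [set e : {set T} | (#|e| == 3) && odd #|[set x in e | g (e :\ x)]|].

Lemma parity_graph_uniform g : uniform 3 (parity_graph g).
Proof. by apply/forallP=> e; apply/implyP; rewrite inE => /andP[]. Qed.

(* A double sum of a symmetric function over ordered pairs of distinct
   elements is even, each unordered pair being counted twice. *)
Lemma even_sum_sym A (f : T -> T -> nat) :
  (forall x y, f x y = f y x) -> ~~ odd (\sum_(u in A) \sum_(x in A :\ u) f u x).
Proof.
move=> f_sym; pose lt (x y : T) := enum_rank x < enum_rank y.
have split_ne u : \sum_(x in A :\ u) f u x =
    \sum_(x in A | lt x u) f u x + \sum_(x in A | lt u x) f u x.
  rewrite (bigID (lt^~ u)) /=; congr (_ + _); apply: eq_bigl => x; rewrite !inE /lt.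
    by case: (eqVneq x u) => [->|_]; rewrite ?ltnn ?andbF.
  case: (eqVneq x u) => [->|xu]; first by rewrite ltnn andbF.
  by rewrite -leqNgt leq_eqVlt val_eqE (inj_eq enum_rank_inj) eq_sym (negbTE xu).
rewrite (eq_bigr _ (fun u _ => split_ne u)) big_split /=.
suff -> : \sum_(u in A) \sum_(x in A | lt u x) f u x =
          \sum_(u in A) \sum_(x in A | lt x u) f u x by rewrite oddD addbb.
rewrite (eq_bigr (fun u => \sum_(x in A) (if lt u x then f u x else 0)));
  last by move=> u _; rewrite big_mkcondr.
rewrite exchange_big /=; apply: eq_bigr => u _.
by rewrite big_mkcondr; apply: eq_bigr => x _; rewrite f_sym.
Qed.

Lemma parity_graph_even g F : #|F| = 4 -> ~~ odd (edges_in (parity_graph g) F).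
Proof.
move=> card4; rewrite edges_in_deletions ?card4 //; last first.
  by move=> e; rewrite inE => /andP[/eqP].
have -> : [set u in F | F :\ u \in parity_graph g] =
          [set u in F | odd (\sum_(x in F :\ u) g (F :\ u :\ x))].
  apply/setP=> u; rewrite !inE; case: (boolP (u \in F)) => //= uF.
  have card3 : #|F :\ u| = 3 by move: (cardsD1 u F); rewrite uF card4; lia.
  by rewrite card3 eqxx card_set_sum.
rewrite card_set_sum; set s := (X in odd X).
suff : odd s = odd (\sum_(u in F) \sum_(x in F :\ u) g (F :\ u :\ x)).
  by move->; apply: even_sum_sym => x y; rewrite !setDDl [[set x] :|: _]setUC.
apply: (big_ind2 (fun m n => odd m = odd n)) => // [m1 n1 m2 n2 eq1 eq2|u _].
  by rewrite !oddD eq1 eq2.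
exact: oddb.
Qed.

Lemma parity_graph_Qfree g : Q_free (parity_graph g) [:: (4, 1); (4, 3)].
Proof.
rewrite /Q_free /= /mf_free andbT; apply/andP; split; apply/existsPn => F;
by apply/negP => /andP[/eqP cardF /eqP edgesF]; move: (parity_graph_even g cardF); rewrite edgesF.
Qed.

Lemma parity_graph_apex g v p : v \notin p -> #|p| = 2 ->
  (v |: p \in parity_graph g) = g p (+) odd #|[set z in p | g ((v |: p) :\ z)]|.
Proof.
move=> vp card2.
by rewrite inE cardsU1 vp card2 /= !card_set_sum big_setU1 //= setU1K // oddD oddb.
Qed.

Definition pairs A : {set {set T}} := [set p : {set T} | p \subset A & #|p| == 2].

Definition apex_forced S v b : {set colouring} :=
  [set g | [forall p in pairs (S :\ v), (v |: p \in parity_graph g) == b]].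

Lemma homogeneous_apex_forced g S v : v \in S ->
  homogeneous 3 (parity_graph g) S ->
  g \in apex_forced S v (is_clique 3 (parity_graph g) S).
Proof.
move=> vS homS; rewrite inE; apply/forallP=> p; apply/implyP.
rewrite inE => /andP[pS /eqP card2].
have vp : v \notin p by apply: contraTN isT => /(subsetP pS); rewrite !inE eqxx.
have vpS : v |: p \subset S.
  by rewrite subUset sub1set vS (subset_trans pS (subD1set S v)).
have card3 : #|v |: p| = 3 by rewrite cardsU1 vp card2.
case: (boolP (is_clique 3 _ S)) => [/forallP/(_ (v |: p))|notClique].
  by rewrite vpS card3 eqxx => /implyP->.
move: homS; rewrite /homogeneous (negbTE notClique) => /forallP/(_ (v |: p)).
by rewrite vpS card3 eqxx => /negbTE->.
Qed.

Lemma apex_forced_determined S v b :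
  {in apex_forced S v b &, forall g g', {in ~: pairs (S :\ v), g =1 g'} -> g = g'}.
Proof.
move=> g g' gF g'F agree; apply/ffunP; suff same_colour p : g p = g' p by [].
case: (boolP (p \in pairs (S :\ v))) => pP; last by apply: agree; rewrite inE.
have := pP; rewrite inE => /andP[pS /eqP card2].
have vp : v \notin p by apply: contraTN isT => /(subsetP pS); rewrite !inE eqxx.
have forced h : h \in apex_forced S v b ->
    h p = b (+) odd #|[set z in p | h ((v |: p) :\ z)]|.
  rewrite inE => /forallP/(_ p); rewrite pP parity_graph_apex //= => /eqP <-.
  by rewrite addbK.
have same_apex : [set z in p | g ((v |: p) :\ z)] = [set z in p | g' ((v |: p) :\ z)].
  apply/setP=> z; rewrite !inE; case: (boolP (z \in p)) => //= zp.
  have vz : v \in (v |: p) :\ z by rewrite !inE eqxx andbT; apply: contraNneq vp => ->.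
  apply: agree; rewrite !inE negb_and; apply/orP; left; apply: contraTN isT.
  by move=> /subsetP/(_ v vz); rewrite !inE eqxx.
by rewrite (forced g gF) (forced g' g'F) same_apex.
Qed.

Lemma card_apex_forced S v b : v \in S ->
  #|apex_forced S v b| * 2 ^ 'C(#|S|.-1, 2) <= #|colouring|.
Proof.
move=> vS; have -> : 'C(#|S|.-1, 2) = #|pairs (S :\ v)|.
  by rewrite cards_draws (cardsD1 v S) vS.
exact: card_forced (@apex_forced_determined S v b).
Qed.

Definition with_homogeneous k : {set colouring} :=
  [set g | [exists S : {set T}, (#|S| == k) && homogeneous 3 (parity_graph g) S]].

Lemma card_with_homogeneous k : 0 < k ->
  #|with_homogeneous k| * 2 ^ 'C(k.-1, 2) <= 'C(#|T|, k) * (k * (2 * #|colouring|)).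
Proof.
move=> k_gt0; set m := 2 ^ _.
pose ksets := [set S : {set T} | #|S| == k].
have cover : with_homogeneous k \subset
    \bigcup_(S in ksets) \bigcup_(v in S) \bigcup_(b in [set: bool]) apex_forced S v b.
  apply/subsetP=> g; rewrite inE => /existsP[S /andP[/eqP cardS homS]].
  have /card_gt0P[v vS] : 0 < #|S| by rewrite cardS.
  apply/bigcupP; exists S; first by rewrite inE cardS.
  apply/bigcupP; exists v => //; apply/bigcupP; exists (is_clique 3 (parity_graph g) S).
    by rewrite inE.
  exact: homogeneous_apex_forced.
apply: leq_trans (leq_mul (subset_leq_card cover) (leqnn m)) _.
rewrite -card_draws -/ksets; apply: card_bigcup_scaled => S; rewrite inE => /eqP cardS.
rewrite -cardS; apply: card_bigcup_scaled => v vS.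
rewrite -[2]card_bool -cardsT; apply: card_bigcup_scaled => b _.
by rewrite /m -cardS card_apex_forced.
Qed.

Lemma exists_parity_graph_hnum_lt k : 0 < k ->
  'C(#|T|, k) * (k * 2) < 2 ^ 'C(k.-1, 2) ->
  exists g, hnum 3 (parity_graph g) < k.
Proof.
move=> k_gt0 few.
have N_gt0 : 0 < #|colouring| by apply/card_gt0P; exists [ffun => false].
have m_gt0 : 0 < 2 ^ 'C(k.-1, 2) by rewrite expn_gt0.
have fewer : #|with_homogeneous k| < #|colouring|.
  rewrite -(ltn_pmul2r m_gt0); apply: leq_ltn_trans (card_with_homogeneous k_gt0) _.
  nia.
have [g gH] : exists g, g \notin with_homogeneous k.
  apply/existsP; apply: contraLR fewer => /existsPn allH; rewrite -leqNgt.
  by apply: subset_leq_card; apply/subsetP=> g _; apply/negbNE/allH.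
exists g; apply: hnum_lt => S cardS; apply: contra gH => homS.
by rewrite inE; apply/existsP; exists S; rewrite cardS eqxx.
Qed.

End ParityConstruction.

Lemma bigmin_le (I : finType) (P : pred I) (F : I -> nat) x0 i :
  P i -> \big[minn/x0]_(j | P j) F j <= F i.
Proof.
move=> Pi; rewrite -big_filter.
have : i \in [seq j <- index_enum I | P j] by rewrite mem_filter Pi mem_index_enum.
elim: [seq j <- _ | _] => [//|j s IH]; rewrite inE big_cons => /predU1P[<-|/IH].
  exact: geq_minl.
exact: leq_trans (geq_minr _ _).
Qed.

Lemma h_rnQ_le r n Q (E : {set {set 'I_n}}) :
  uniform r E -> Q_free E Q -> h_rnQ r n Q <= hnum r E.
Proof. by move=> Er EQ; apply: bigmin_le; rewrite Er EQ. Qed.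

Lemma h_rnQ_ge r n Q m : m <= n ->
  (forall E : {set {set 'I_n}}, uniform r E -> Q_free E Q -> m <= hnum r E) ->
  m <= h_rnQ r n Q.
Proof.
move=> m_le_n hnum_ge; rewrite /h_rnQ.
by elim/big_rec: _ => // E x /andP[Er EQ] IH; rewrite leq_min IH hnum_ge.
Qed.

Local Notation Q13 := [:: (4, 1); (4, 3)].

Lemma h3_lower n s : 4 ^ s < n -> s.+1 <= h_rnQ 3 n Q13.
Proof.
move=> big_n; apply: h_rnQ_ge => [|E E3 /and3P[free41 free43 _]].
  exact: leq_ltn_trans (ltnW (ltn_expl s (isT : 1 < 4))) big_n.
by apply: hnum_lower; rewrite ?card_ord.
Qed.

Lemma h3_upper n k : 0 < k -> 'C(n, k) * (k * 2) < 2 ^ 'C(k.-1, 2) ->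
  h_rnQ 3 n Q13 < k.
Proof.
move=> k_gt0 few; rewrite -[n]card_ord in few.
have [g hnum_lt_k] := exists_parity_graph_hnum_lt k_gt0 few.
apply: leq_ltn_trans hnum_lt_k.
exact: h_rnQ_le (parity_graph_uniform g) (parity_graph_Qfree g).
Qed.

Lemma INR_expn2 k : INR (2 ^ k) = (2 ^ k)%R.
Proof. by elim: k => [//|k IH]; rewrite expnS mult_INR IH. Qed.

Lemma ln2_gt0 : (0 < ln 2)%R.
Proof. by have := ln_lt_2; lra. Qed.

Lemma log2_expn2 k : log2 (INR (2 ^ k)) = INR k.
Proof.
move: ln2_gt0 => ln2_pos; rewrite /log2 INR_expn2 ln_pow; [field; lra | lra].
Qed.

Lemma log2_le (x y : R) : (0 < x)%R -> (x <= y)%R -> (log2 x <= log2 y)%R.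
Proof.
move=> x_gt0 /Rle_lt_or_eq_dec[x_lt_y|<-]; last exact: Rle_refl.
apply: Rmult_le_compat_r; first by left; apply/Rinv_0_lt_compat/ln2_gt0.
by left; apply: ln_increasing.
Qed.

Lemma log2_ge_expn (n k : nat) : 2 ^ k <= n -> (INR k <= log2 (INR n))%R.
Proof.
move=> le_kn; rewrite -[INR k]log2_expn2; apply: log2_le; last by apply/le_INR/leP.
by rewrite INR_expn2; apply: pow_lt; lra.
Qed.

Lemma log2_le_expn (n k : nat) : 0 < n -> n <= 2 ^ k -> (log2 (INR n) <= INR k)%R.
Proof.
move=> n_gt0 le_nk; rewrite -[INR k]log2_expn2; apply: log2_le; last by apply/le_INR/leP.
by apply/lt_0_INR/ltP.
Qed.

Lemma bin_le_expn n k : 'C(n, k) <= n ^ k.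
Proof.
rewrite -(leq_pmul2r (fact_gt0 k)) bin_ffact; apply: leq_trans (leq_pmulr _ (fact_gt0 k)).
elim: k => [//|k IH]; rewrite ffactnSr expnSr; exact: leq_mul IH (leq_subr k n).
Qed.

(* C(k-1, 2) is about k^2/2, which dominates a k + k + 1 when 8 a <= k. *)
Lemma exponent_bound a k : 64 <= k -> 8 * a <= k -> a * k + k.+1 <= 'C(k.-1, 2).
Proof.
move=> k_ge64 a_le.
have ak_le : 8 * (a * k) <= k * k by rewrite mulnA leq_mul2r a_le orbT.
have kk_ge : 64 * k <= k * k by rewrite leq_mul2r k_ge64 orbT.
have k_sq : k.-1 * k.-2 + 3 * k = k * k + 2.
  by case: k k_ge64 {a_le ak_le kk_ge} => [|[|k']] //= _; rewrite !mulSn !mulnS; lia.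
rewrite bin2 geq_half_double -mul2n; lia.
Qed.

Lemma counting_inequality m n : 4 <= m -> n < 2 ^ m.+1 ->
  'C(n, 4 * (m * m)) * (4 * (m * m) * 2) < 2 ^ 'C((4 * (m * m)).-1, 2).
Proof.
move=> m_ge4 n_lt; set k := 4 * (m * m).
have m_sq : 4 * m <= m * m by rewrite leq_mul2r m_ge4 orbT.
have k_gt0 : 0 < k by rewrite /k; lia.
have binom_le : 'C(n, k) <= 2 ^ (m.+1 * k).
  rewrite expnM; apply: leq_trans (bin_le_expn n k) _.
  by rewrite (leq_exp2r _ _ k_gt0) ltnW.
have k2_lt : k * 2 < 2 ^ k.+1 by rewrite expnS mulnC ltn_pmul2l // ltn_expl.
have exps_le : m.+1 * k + k.+1 <= 'C(k.-1, 2) by apply: exponent_bound; rewrite /k; lia.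
apply: (@leq_trans (2 ^ (m.+1 * k + k.+1))); last by rewrite leq_exp2l.
rewrite expnD; apply: leq_ltn_trans (leq_mul binom_le (leqnn (k * 2))) _.
by rewrite ltn_pmul2l ?expn_gt0.
Qed.

(* Lower bound in logarithmic form: with 4^s <= n - 1 < 4^(s+1),
   h >= s + 1 >= log2 n / 2. *)
Lemma lower_bound n : 2 <= n ->
  (/ 2 * log2 (INR n) <= INR (h_rnQ 3 n Q13))%R.
Proof.
move=> n_ge2; set s := trunc_log 4 n.-1.
have s_le : 4 ^ s < n.
  suff : 4 ^ s <= n.-1 by lia.
  by apply: trunc_logP; lia.
have n_le : n <= 2 ^ (2 * s.+1).
  have -> : 2 ^ (2 * s.+1) = 4 ^ s.+1 by rewrite expnM.
  have : n.-1 < 4 ^ s.+1 by apply: trunc_log_ltn.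
  lia.
have h_ge : (INR s.+1 <= INR (h_rnQ 3 n Q13))%R by apply/le_INR/leP/h3_lower.
have := log2_le_expn (ltnW n_ge2) n_le; rewrite mult_INR [INR 2]/=.
lra.
Qed.

(* Upper bound in logarithmic form: with 2^m <= n < 2^(m+1) and m >= 4,
   h < 4 m^2 <= 4 (log2 n)^2. *)
Lemma upper_bound n : 16 <= n ->
  (INR (h_rnQ 3 n Q13) < 4 * (log2 (INR n)) ^ 2)%R.
Proof.
move=> n_ge16; set m := trunc_log 2 n.
have m_ge4 : 4 <= m by apply: trunc_log_max.
have h_lt : h_rnQ 3 n Q13 < 4 * (m * m).
  apply: h3_upper; first by rewrite !muln_gt0; lia.
  exact/counting_inequality/trunc_log_ltn.
have m_le : (INR m <= log2 (INR n))%R by apply/log2_ge_expn/trunc_logP; lia.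
have := lt_INR _ _ (ltP h_lt); rewrite !mult_INR [INR 4]/=.
have := pos_INR m; nra.
Qed.

Theorem mainTheorem7 :
  exists N : nat, forall n : nat, (N <= n)%N ->
    (/ 2 * log2 (INR n) <= INR (h_rnQ 3 n [:: (4%nat, 1%nat); (4%nat, 3%nat)])
     /\ INR (h_rnQ 3 n [:: (4%nat, 1%nat); (4%nat, 3%nat)]) < 4 * (log2 (INR n)) ^ 2)%R.
Proof.
exists 16 => n n_ge16; split; first by apply: lower_bound; lia.
exact: upper_bound.
Qed.
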